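(* Let $X$ be a set, $U\subset 2^X$ a non-empty family of subsets and $\mu:U\to B_2$ a function. (a) If $U$ is closed under $\Delta$ and $\cap$, then the following are equivalent: (a.1) for all $A,B\in U$, $A\cap B=\emptyset$ implies $\mu(A\cup B)=\mu(A)\oplus\mu(B)$; (a.2) for all $A,B\in U$, $\mu(A\Delta B)=\mu(A)\oplus\mu(B)$. (b) If $U$ is closed under $\Theta$ and $\cup$, then the following are equivalent: (b.1) for all $A,B\in U$, $A\cup B=X$ implies $\mu(A\cap B)=\mu(A)\otimes\mu(B)$; (b.2) for all $A,B\in U$, $\mu(A\Theta B)=\mu(A)\otimes\mu(B)$.
   Context: $B_2=\{0,1\}$. On $B_2$, $\oplus$ is addition modulo 2 ($x\oplus y=1$ iff $x\neq y$) and $\otimes$ is the coincidence ($x\otimes y=1$ iff $x=y$). For subsets of $X$, $\Delta$ is the symmetric difference and $A\Theta B=X-(A\Delta B)$. *)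

From mathcomp Require Import all_boot.
From mathcomp Require Import boolp classical_sets.
Set Implicit Arguments. Unset Strict Implicit. Unset Printing Implicit Defensive.
Local Open Scope classical_set_scope.

Definition symdiff (X : Type) (A B : set X) : set X := (A `\` B) `|` (B `\` A).
Definition theta (X : Type) (A B : set X) : set X := setT `\` symdiff A B.

(* B_2 = {0,1} as bool (false = 0, true = 1). *)
Definition b2plus (x y : bool) : bool := x != y.
Definition b2coin (x y : bool) : bool := x == y.

(** Part (a): [A Δ B] is the disjoint union of [A \ B] and [B \ A], and [A] is
    the disjoint union of [A ∩ B] and [A \ B = A Δ (A ∩ B)], so disjoint
    additivity yields [μ(A Δ B) = μ(A \ B) ⊕ μ(B \ A)] and the common summand
    [μ(A ∩ B)] cancels in [μ A ⊕ μ B]; conversely [A Δ B = A ∪ B] for disjoint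
    [A], [B]. Part (b) is part (a) for the family of complements
    [{A | X - A ∈ U}] with the complemented valuation [A ↦ ¬ μ(X - A)], since
    complementation exchanges [Θ] with [Δ], [∪] with [∩], covers with disjoint
    pairs, and [⊗] with [⊕]. *)
From mathcomp Require Import all_boot.
From mathcomp Require Import boolp classical_sets.
Set Implicit Arguments.
Unset Strict Implicit.
Unset Printing Implicit Defensive.

Local Open Scope classical_set_scope.

Section SetIdentities.
Variable X : Type.
Implicit Types A B : set X.

Lemma symdiff_disjoint A B : A `&` B = set0 -> symdiff A B = A `|` B.
Proof.
move=> /disjoints_subset AsubCB; apply/seteqP; split=> x.
  by case=> -[]; [left | right].
by case=> [Ax|Bx]; [left | right]; split=> //; [exact: AsubCB | move/AsubCB].
Qed.

Lemma symdiff_setIr A B : symdiff A (A `&` B) = A `\` B.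
Proof.
apply/seteqP; split=> x; last by move=> [Ax nBx]; left; split=> // -[].
by case=> [[Ax nABx] | [[]]] //; split=> // Bx; apply: nABx.
Qed.

Lemma setDD_disjoint A B : (A `\` B) `&` (B `\` A) = set0.
Proof. by apply/seteqP; split=> x // [[Ax _] [_]]. Qed.

Lemma setID_disjoint A B : (A `&` B) `&` (A `\` B) = set0.
Proof. by apply/seteqP; split=> x // [[_ Bx] [_]]. Qed.

Lemma symdiffCC A B : symdiff (~` A) (~` B) = symdiff A B.
Proof. by rewrite /symdiff !setDE !setCK setUC (setIC B) (setIC A). Qed.

Lemma setC_symdiff A B : ~` symdiff A B = theta (~` A) (~` B).
Proof. by rewrite /theta setTD symdiffCC. Qed.

Lemma setCU_eqT A B : (A `|` B = setT) = (~` A `&` ~` B = set0).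
Proof.
rewrite -setCU; apply/propext; split=> [->|]; first exact: setCT.
by rewrite -setCT => /setC_inj.
Qed.

End SetIdentities.

Lemma b2plus_negb (x y : bool) : b2plus (~~ x) (~~ y) = ~~ b2coin x y.
Proof. by case: x; case: y. Qed.

Lemma b2plusKA (x y z : bool) : b2plus (b2plus z x) (b2plus z y) = b2plus x y.
Proof. by case: x; case: y; case: z. Qed.

Section Additivity.
Variables (X : Type) (U : set (set X)) (mu : set X -> bool).

Definition disjoint_additive := forall A B, U A -> U B -> A `&` B = set0 ->
  mu (A `|` B) = b2plus (mu A) (mu B).

Definition symdiff_additive := forall A B, U A -> U B ->
  mu (symdiff A B) = b2plus (mu A) (mu B).

Definition cover_multiplicative := forall A B, U A -> U B -> A `|` B = setT ->
  mu (A `&` B) = b2coin (mu A) (mu B).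

Definition theta_multiplicative := forall A B, U A -> U B ->
  mu (theta A B) = b2coin (mu A) (mu B).

Lemma symdiff_additive_disjoint : symdiff_additive -> disjoint_additive.
Proof. by move=> mu_symdiff A B UA UB /symdiff_disjoint <-; apply: mu_symdiff. Qed.

Hypothesis U_symdiff : forall A B, U A -> U B -> U (symdiff A B).
Hypothesis U_setI : forall A B, U A -> U B -> U (A `&` B).

Lemma U_setD A B : U A -> U B -> U (A `\` B).
Proof. by move=> UA UB; rewrite -symdiff_setIr; apply/U_symdiff/U_setI. Qed.

Lemma disjoint_additive_setID A B : disjoint_additive -> U A -> U B ->
  mu A = b2plus (mu (A `&` B)) (mu (A `\` B)).
Proof.
move=> mu_setU UA UB.
by rewrite -mu_setU ?setUIDK ?setID_disjoint //; [apply: U_setI | apply: U_setD].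
Qed.

Lemma disjoint_additive_symdiff : disjoint_additive -> symdiff_additive.
Proof.
move=> mu_setU A B UA UB.
rewrite (disjoint_additive_setID mu_setU UA UB) (disjoint_additive_setID mu_setU UB UA).
rewrite [B `&` A]setIC b2plusKA /symdiff mu_setU ?setDD_disjoint //; exact: U_setD.
Qed.

Lemma disjoint_additiveP : disjoint_additive <-> symdiff_additive.
Proof.
by split; [apply: disjoint_additive_symdiff | apply: symdiff_additive_disjoint].
Qed.

End Additivity.

Section Complementation.
Variables (X : Type) (U : set (set X)) (mu : set X -> bool).

Let mu_setC (A : set X) : bool := ~~ mu (~` A).

Lemma preimage_setC_symdiff :
    (forall A B, U A -> U B -> U (theta A B)) ->
  forall A B, (setC @^-1` U) A -> (setC @^-1` U) B -> (setC @^-1` U) (symdiff A B).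
Proof. by move=> U_theta A B UA UB; rewrite /preimage /= setC_symdiff; apply: U_theta. Qed.

Lemma preimage_setC_setI :
    (forall A B, U A -> U B -> U (A `|` B)) ->
  forall A B, (setC @^-1` U) A -> (setC @^-1` U) B -> (setC @^-1` U) (A `&` B).
Proof. by move=> U_setU A B UA UB; rewrite /preimage /= setCI; apply: U_setU. Qed.

Lemma cover_multiplicative_setC :
  cover_multiplicative U mu <-> disjoint_additive (setC @^-1` U) mu_setC.
Proof.
split=> [mu_setI A B UA UB AB0 | mu_setU A B UA UB ABT].
  by rewrite /mu_setC b2plus_negb setCU mu_setI // setCU_eqT !setCK.
have := mu_setU (~` A) (~` B); rewrite /preimage /mu_setC /= !setCK setCU !setCK.
by rewrite b2plus_negb -setCU_eqT => /(_ UA UB ABT) /negb_inj.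
Qed.

Lemma theta_multiplicative_setC :
  theta_multiplicative U mu <-> symdiff_additive (setC @^-1` U) mu_setC.
Proof.
split=> [mu_theta A B UA UB | mu_symdiff A B UA UB].
  by rewrite /mu_setC b2plus_negb setC_symdiff mu_theta.
have := mu_symdiff (~` A) (~` B); rewrite /preimage /mu_setC /= !setCK.
by rewrite setC_symdiff !setCK b2plus_negb => /(_ UA UB) /negb_inj.
Qed.

Lemma cover_multiplicativeP :
    (forall A B, U A -> U B -> U (theta A B)) ->
    (forall A B, U A -> U B -> U (A `|` B)) ->
  cover_multiplicative U mu <-> theta_multiplicative U mu.
Proof.
move=> U_theta U_setU.
apply: iff_trans cover_multiplicative_setC _.
apply: iff_trans _ (iff_sym theta_multiplicative_setC).
exact/disjoint_additiveP/preimage_setC_setI/U_setU/preimage_setC_symdiff.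
Qed.

End Complementation.

Theorem theorem2p1 (X : Type) (U : set (set X)) (mu : set X -> bool) :
  U !=set0 ->
  ((forall A B, U A -> U B -> U (symdiff A B)) ->
   (forall A B, U A -> U B -> U (A `&` B)) ->
   ((forall A B, U A -> U B -> A `&` B = set0 ->
       mu (A `|` B) = b2plus (mu A) (mu B)) <->
    (forall A B, U A -> U B -> mu (symdiff A B) = b2plus (mu A) (mu B))))
  /\
  ((forall A B, U A -> U B -> U (theta A B)) ->
   (forall A B, U A -> U B -> U (A `|` B)) ->
   ((forall A B, U A -> U B -> A `|` B = setT ->
       mu (A `&` B) = b2coin (mu A) (mu B)) <->
    (forall A B, U A -> U B -> mu (theta A B) = b2coin (mu A) (mu B)))).
Proof.
move=> _; split; first exact: disjoint_additiveP.
exact: cover_multiplicativeP.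
Qed.
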